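(* Every metric family with weak finite decomposition complexity also has straight finite decomposition complexity. In fact, the collection $s\mathfrak{D}$ of metric families with straight finite decomposition complexity is stable under weak decomposition.
   Context: A metric family is a set of metric spaces; it is uniformly bounded if $\sup\{\mathrm{diam}(Z): Z\in\mathcal{Z}\}<\infty$. Subsets $A,B$ are $r$-disjoint if $d(A,B)>r$. A $(k,r)$-decomposition of a metric space $X$ over a metric family $\mathcal{Y}$ is a decomposition $X=X_0\cup X_1\cup\cdots\cup X_{k-1}$ with each $X_i=\bigsqcup_j X_{ij}$ a union of pairwise $r$-disjoint subsets and each $X_{ij}\in\mathcal{Y}$. A family $\mathcal{X}$ is $(k,r)$-decomposable over $\mathcal{Y}$ if every member of $\mathcal{X}$ admits a $(k,r)$-decomposition over $\mathcal{Y}$; for $k=2$ this is called $r$-decomposable. For a collection $\mathfrak{U}$ of metric families, $\mathcal{X}$ is $k$-decomposable over $\mathfrak{U}$ if for every $r>0$ there is $\mathcal{Y}_r\in\mathfrak{U}$ such that $\mathcal{X}$ is $(k,r)$-decomposable over $\mathcal{Y}_r$; $\mathcal{X}$ is weakly decomposable over $\mathfrak{U}$ if it is $k$-decomposable over $\mathfrak{U}$ for some $k\in\mathbb{N}$; $\mathfrak{U}$ is stable under weak decomposition if every family weakly decomposable over $\mathfrak{U}$ lies in $\mathfrak{U}$. The collection of families with weak finite decomposition complexity (wFDC) is the smallest collection containing all uniformly bounded families and stable under weak decomposition. A metric family $\mathcal{X}$ has straight finite decomposition complexity (sFDC) if for every sequence $R_1<R_2<\cdots$ of positive numbers there exist $n\in\mathbb{N}$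 and metric families $\mathcal{X}_0=\mathcal{X},\mathcal{X}_1,\dots,\mathcal{X}_n$ such that $\mathcal{X}_i$ is $R_{i+1}$-decomposable over $\mathcal{X}_{i+1}$ for each $i<n$ and $\mathcal{X}_n$ is uniformly bounded; $s\mathfrak{D}$ denotes the collection of such families. *)

From Stdlib Require Import Reals Lra ProofIrrelevance.
Open Scope R_scope.

Record MetricSpace := {
  carrier :> Type;
  dist : carrier -> carrier -> R;
  dist_nonneg : forall x y, 0 <= dist x y;
  dist_eq0 : forall x y, dist x y = 0 <-> x = y;
  dist_sym : forall x y, dist x y = dist y x;
  dist_tri : forall x y z, dist x z <= dist x y + dist y z
}.

Arguments dist {m} _ _.

Definition MetricFamily := MetricSpace -> Prop.

Section Subspace.
Variables (X : MetricSpace) (A : X -> Prop).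
Definition sub_carrier := {x : X | A x}.
Definition sub_dist (x y : sub_carrier) : R := dist (proj1_sig x) (proj1_sig y).
Lemma sub_dist_nonneg x y : 0 <= sub_dist x y.
Proof. apply dist_nonneg. Qed.
Lemma sub_dist_eq0 x y : sub_dist x y = 0 <-> x = y.
Proof.
  unfold sub_dist; split.
  - intros H; apply dist_eq0 in H. destruct x as [x hx], y as [y hy]; simpl in H.
    subst y. f_equal. apply proof_irrelevance.
  - intros ->; apply dist_eq0; reflexivity.
Qed.
Lemma sub_dist_sym x y : sub_dist x y = sub_dist y x.
Proof. apply dist_sym. Qed.
Lemma sub_dist_tri x y z : sub_dist x z <= sub_dist x y + sub_dist y z.
Proof. apply dist_tri. Qed.
Definition subspace : MetricSpace :=
  {| carrier := sub_carrier; dist := sub_dist; dist_nonneg := sub_dist_nonneg;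
     dist_eq0 := sub_dist_eq0; dist_sym := sub_dist_sym; dist_tri := sub_dist_tri |}.
End Subspace.

Definition uniformly_bounded (F : MetricFamily) : Prop :=
  exists B : R, forall Z : MetricSpace, F Z -> forall x y : Z, dist x y <= B.

(** A and B are r-disjoint: d(A,B) = inf {d(a,b)} > r
    (with inf of the empty set = +oo). *)
Definition r_disjoint (X : MetricSpace) (r : R) (A B : X -> Prop) : Prop :=
  exists s : R, r < s /\ forall a b : X, A a -> B b -> s <= dist a b.

(** A (k,r)-decomposition of X over Y: X = X_0 u ... u X_{k-1}, where
    X_i is the union of the subsets X_ij (j ranging over an index type J i),
    pairwise r-disjoint, and each X_ij (as a metric subspace) belongs to Y. *)
Definition kr_decomposition (k : nat) (r : R) (X : MetricSpace) (Y : MetricFamily) : Prop :=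
  exists (J : nat -> Type) (U : forall i : nat, J i -> X -> Prop),
    (forall x : X, exists i : nat, (i < k)%nat /\ exists j : J i, U i j x) /\
    (forall i : nat, (i < k)%nat -> forall j j' : J i, j <> j' -> r_disjoint X r (U i j) (U i j')) /\
    (forall i : nat, (i < k)%nat -> forall j : J i, Y (subspace X (U i j))).

Definition kr_decomposable (k : nat) (r : R) (Xf Y : MetricFamily) : Prop :=
  forall X : MetricSpace, Xf X -> kr_decomposition k r X Y.

Definition r_decomposable (r : R) (Xf Y : MetricFamily) : Prop :=
  kr_decomposable 2 r Xf Y.

Definition FamilyCollection := MetricFamily -> Prop.

Definition k_decomposable_over (k : nat) (Xf : MetricFamily) (UU : FamilyCollection) : Prop :=
  forall r : R, 0 < r -> exists Y : MetricFamily, UU Y /\ kr_decomposable k r Xf Y.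

Definition weakly_decomposable_over (Xf : MetricFamily) (UU : FamilyCollection) : Prop :=
  exists k : nat, k_decomposable_over k Xf UU.

Definition stable_under_weak_decomposition (UU : FamilyCollection) : Prop :=
  forall Xf : MetricFamily, weakly_decomposable_over Xf UU -> UU Xf.

(** wFDC: the smallest collection containing all uniformly bounded families
    and stable under weak decomposition (intersection of all such collections). *)
Definition wFDC (Xf : MetricFamily) : Prop :=
  forall UU : FamilyCollection,
    (forall Y, uniformly_bounded Y -> UU Y) ->
    stable_under_weak_decomposition UU -> UU Xf.

(** sFDC.  The sequence R_1 < R_2 < ... is represented by Rs : nat -> R with
    Rs i = R_{i+1}. *)
Definition sFDC (Xf : MetricFamily) : Prop :=
  forall Rs : nat -> R,
    (forall i, 0 < Rs i) -> (forall i, Rs i < Rs (S i)) ->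
    exists (n : nat) (F : nat -> MetricFamily),
      F 0%nat = Xf /\
      (forall i : nat, (i < n)%nat -> r_decomposable (Rs i) (F i) (F (S i))) /\
      uniformly_bounded (F n).

(* Given scales R_1 < R_2 < ..., use the weak decomposition only once: if X is
   (k, R_(k+1))-decomposable over Y, the k colour classes can be split off one per
   step, colour i at step i + 1 at scale R_(i+1) <= R_(k+1), each step being a
   2-decomposition into the pieces of colour i and the union of the remaining
   colours.  After k steps only pieces from Y remain, and Y has sFDC, so the chain
   continues with that of Y for the shifted scales R_(k+1) < R_(k+2) < ....
   Finally wFDC is contained in sFDC because sFDC contains the uniformly bounded
   families and wFDC is the least collection with these closure properties. *)

From Stdlib Require Import Reals Lra Lia ProofIrrelevance.
Open Scope R_scope.

Definition isometric (Z Z' : MetricSpace) : Prop :=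
  exists (f : Z -> Z') (g : Z' -> Z),
    (forall x, g (f x) = x) /\ (forall y, f (g y) = y) /\
    (forall x y, dist (f x) (f y) = dist x y).

(* A subspace of a subspace is only isometric, not equal, to a subspace, so the
   intermediate families of the chains are taken up to isometry. *)
Definition isometric_closure (P : MetricFamily) : MetricFamily :=
  fun Z => exists Z', P Z' /\ isometric Z Z'.

Lemma isometric_sym Z Z' : isometric Z Z' -> isometric Z' Z.
Proof.
  intros [f [g [gf [fg Hf]]]]. exists g, f. split; [exact fg | split; [exact gf |]].
  intros x y. rewrite <- Hf, !fg. reflexivity.
Qed.

Lemma isometric_trans Z1 Z2 Z3 : isometric Z1 Z2 -> isometric Z2 Z3 -> isometric Z1 Z3.
Proof.
  intros [f [g [gf [fg Hf]]]] [f' [g' [gf' [fg' Hf']]]].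
  exists (fun x => f' (f x)), (fun y => g (g' y)). split; [| split].
  - intros x. rewrite gf'. apply gf.
  - intros y. rewrite fg. apply fg'.
  - intros x y. rewrite Hf'. apply Hf.
Qed.

Lemma isometric_closure_incl (P : MetricFamily) Z : P Z -> isometric_closure P Z.
Proof.
  intros HZ. exists Z. split; [exact HZ |].
  exists (fun x => x), (fun x => x). auto.
Qed.

Lemma isometric_closure_mono (P Q : MetricFamily) :
  (forall Z, P Z -> Q Z) -> forall Z, isometric_closure P Z -> isometric_closure Q Z.
Proof. intros PQ Z [Z' [HZ' iso]]. exists Z'. split; [apply PQ, HZ' | exact iso]. Qed.

Lemma subspace_point_eq (X : MetricSpace) (A : X -> Prop) (a b : subspace X A) :
  proj1_sig a = proj1_sig b -> a = b.
Proof.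
  destruct a as [a Ha], b as [b Hb]; simpl. intros <-. f_equal. apply proof_irrelevance.
Qed.

Lemma isometric_subspace_full (X : MetricSpace) (A : X -> Prop) :
  (forall x, A x) -> isometric (subspace X A) X.
Proof.
  intros HA. exists (fun w => proj1_sig w), (fun x => exist A x (HA x)).
  split; [| split]; [| reflexivity | reflexivity].
  intros w. apply subspace_point_eq. reflexivity.
Qed.

Lemma isometric_subspace_subspace (X : MetricSpace) (A B : X -> Prop) :
  (forall x, B x -> A x) ->
  isometric (subspace (subspace X A) (fun w => B (proj1_sig w))) (subspace X B).
Proof.
  intros BA. unshelve eexists; [intros [[x Ha] Hx]; exact (exist B x Hx) |].
  unshelve eexists; [intros [x Hx]; exact (exist _ (exist A x (BA x Hx)) Hx) |].
  split; [| split].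
  - intros [[x Ha] Hb]. do 2 apply subspace_point_eq. reflexivity.
  - intros [x Hx]. apply subspace_point_eq. reflexivity.
  - intros [[x Ha] Hb] [[y Ha'] Hb']. reflexivity.
Qed.

Lemma isometric_subspace_preimage (Z Z' : MetricSpace) (f : Z -> Z') (g : Z' -> Z) :
  (forall x, g (f x) = x) -> (forall y, f (g y) = y) ->
  (forall x y, dist (f x) (f y) = dist x y) ->
  forall A : Z' -> Prop, isometric (subspace Z (fun z => A (f z))) (subspace Z' A).
Proof.
  intros gf fg Hf A.
  unshelve eexists; [intros [z Hz]; exact (exist A (f z) Hz) |].
  unshelve eexists; [intros [y Hy]; exists (g y); rewrite fg; exact Hy |].
  split; [| split].
  - intros [z Hz]. apply subspace_point_eq, gf.
  - intros [y Hy]. apply subspace_point_eq, fg.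
  - intros [x Hx] [y Hy]. apply Hf.
Qed.

Definition is_kr_decomposition (k : nat) (r : R) (X : MetricSpace) (Y : MetricFamily)
    (J : nat -> Type) (U : forall i : nat, J i -> X -> Prop) : Prop :=
  (forall x : X, exists i : nat, (i < k)%nat /\ exists j : J i, U i j x) /\
  (forall i : nat, (i < k)%nat -> forall j j' : J i, j <> j' -> r_disjoint X r (U i j) (U i j')) /\
  (forall i : nat, (i < k)%nat -> forall j : J i, Y (subspace X (U i j))).

Lemma kr_decomposition_mono k r X (Y Y' : MetricFamily) :
  (forall Z, Y Z -> Y' Z) -> kr_decomposition k r X Y -> kr_decomposition k r X Y'.
Proof.
  intros YY' [J [U [Hcover [Hdisj Hpieces]]]]. exists J, U.
  split; [exact Hcover | split; [exact Hdisj |]].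
  intros i Hi j. apply YY', Hpieces, Hi.
Qed.

Lemma kr_decomposition_isometric k r (Z Z' : MetricSpace) (Q : MetricFamily) :
  isometric Z Z' -> kr_decomposition k r Z' (isometric_closure Q) ->
  kr_decomposition k r Z (isometric_closure Q).
Proof.
  intros [f [g [gf [fg Hf]]]] [J [U [Hcover [Hdisj Hpieces]]]].
  exists J, (fun i j z => U i j (f z)). split; [| split].
  - intros x. exact (Hcover (f x)).
  - intros i Hi j j' Hjj'. destruct (Hdisj i Hi j j' Hjj') as [s [Hrs Hs]].
    exists s. split; [exact Hrs |]. intros a b Ha Hb. rewrite <- Hf. apply Hs; assumption.
  - intros i Hi j. destruct (Hpieces i Hi j) as [Z'' [HQ iso]]. exists Z''.
    split; [exact HQ |].
    exact (isometric_trans _ _ _ (isometric_subspace_preimage Z Z' f g gf fg Hf _) iso).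
Qed.

Lemma kr_decomposition_trivial k r Z (P : MetricFamily) :
  (0 < k)%nat -> P Z -> kr_decomposition k r Z (isometric_closure P).
Proof.
  intros Hk HZ.
  exists (fun i => match i with 0%nat => unit | _ => Empty_set end), (fun _ _ _ => True).
  split; [| split].
  - intros x. exists 0%nat. split; [exact Hk | exists tt; exact I].
  - intros [|i] _ j j' Hjj'; [destruct j, j'; contradiction | destruct j].
  - intros [|i] _ j; [| destruct j].
    exists Z. split; [exact HZ |]. apply isometric_subspace_full. trivial.
Qed.

Lemma r_decomposable_isometric_closure r (P Q : MetricFamily) :
  r_decomposable r P (isometric_closure Q) ->
  r_decomposable r (isometric_closure P) (isometric_closure Q).
Proof.
  intros HPQ Z [Z' [HZ' iso]]. exact (kr_decomposition_isometric _ _ _ _ _ iso (HPQ Z' HZ')).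
Qed.

Section Tails.

Variables (k : nat) (X : MetricSpace) (J : nat -> Type) (U : forall i : nat, J i -> X -> Prop).

Definition tail (m : nat) (x : X) : Prop :=
  exists i, (m <= i)%nat /\ (i < k)%nat /\ exists j : J i, U i j x.

Lemma tail_empty m x : (k <= m)%nat -> ~ tail m x.
Proof. intros Hkm [i [Hmi [Hik _]]]. lia. Qed.

Definition peel_index (m i : nat) : Type :=
  match i with 0%nat => {j : J m | (m < k)%nat} | _ => unit end.

Definition peel_piece (m i : nat) : peel_index m i -> subspace X (tail m) -> Prop :=
  match i as i0 return peel_index m i0 -> subspace X (tail m) -> Prop with
  | 0%nat => fun j w => U m (proj1_sig j) (proj1_sig w)
  | S _ => fun _ w => tail (S m) (proj1_sig w)
  end.

Variables (r : R) (Y : MetricFamily).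
Hypothesis HU : is_kr_decomposition k r X Y J U.

Lemma tail_0 x : tail 0 x.
Proof.
  destruct HU as [Hcover _]. destruct (Hcover x) as [i [Hi Hj]].
  exists i. split; [lia | split; assumption].
Qed.

Lemma tail_peel m r' (T : MetricFamily) :
  ((m < k)%nat -> r' <= r) -> ((m < k)%nat -> forall Z, Y Z -> T Z) ->
  T (subspace X (tail (S m))) ->
  kr_decomposition 2 r' (subspace X (tail m)) (isometric_closure T).
Proof.
  destruct HU as [_ [Hdisj Hpieces]]. intros Hr HYT HT.
  exists (peel_index m), (peel_piece m). split; [| split].
  - intros [x [i [Hmi [Hik [j Hj]]]]].
    destruct (Nat.eq_dec i m) as [-> | Hne].
    + exists 0%nat. split; [lia |]. exists (exist _ j Hik). exact Hj.
    + exists 1%nat. split; [lia |]. exists tt. exists i. split; [lia | eauto].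
  - intros [|[|i]] Hi; [| | lia].
    + intros [j Hmk] [j' Hmk'] Hne.
      assert (j <> j') as Hjj'.
      { intros <-. apply Hne. f_equal. apply proof_irrelevance. }
      destruct (Hdisj m Hmk j j' Hjj') as [s [Hrs Hs]].
      exists s. split; [specialize (Hr Hmk); lra |].
      intros a b Ha Hb. apply Hs; assumption.
    + intros [] [] Hne. contradiction.
  - intros [|[|i]] Hi; [| | lia].
    + intros [j Hmk]. exists (subspace X (U m j)). split; [apply HYT, Hpieces; exact Hmk |].
      apply isometric_subspace_subspace. intros x Hx. exists m. split; [lia | eauto].
    + intros u. exists (subspace X (tail (S m))). split; [exact HT |].
      apply isometric_subspace_subspace. intros x [i' [Hi' Hrest]]. exists i'.
      split; [lia | exact Hrest].
Qed.

End Tails.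

Definition tails (Xf : MetricFamily) (k : nat) (r : R) (Y : MetricFamily) (m : nat) :
    MetricFamily :=
  fun W => exists X J U, Xf X /\ is_kr_decomposition k r X Y J U /\
                         W = subspace X (tail k X J U m).

Lemma tails_0 Xf k r Y X :
  kr_decomposable k r Xf Y -> Xf X -> isometric_closure (tails Xf k r Y 0) X.
Proof.
  intros HXY HX. destruct (HXY X HX) as [J [U HU]].
  exists (subspace X (tail k X J U 0)). split; [exists X, J, U; auto |].
  apply isometric_sym, isometric_subspace_full. exact (tail_0 k X J U r Y HU).
Qed.

Lemma tails_empty Xf k r Y m Z :
  (k <= m)%nat -> tails Xf k r Y m Z -> Z -> False.
Proof.
  intros Hkm [X [J [U [_ [_ ->]]]]] [x Hx]. exact (tail_empty k X J U m x Hkm Hx).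
Qed.

Lemma tails_r_decomposable Xf k r Y m r' (T : MetricFamily) :
  ((m < k)%nat -> r' <= r) -> ((m < k)%nat -> forall Z, Y Z -> T Z) ->
  (forall Z, tails Xf k r Y (S m) Z -> T Z) ->
  r_decomposable r' (tails Xf k r Y m) (isometric_closure T).
Proof.
  intros Hr HYT HT Z [X [J [U [HX [HU ->]]]]].
  apply (tail_peel k X J U r Y HU m r' T Hr HYT).
  apply HT. exists X, J, U. auto.
Qed.

Lemma increasing_seq_lt (Rs : nat -> R) :
  (forall i, Rs i < Rs (S i)) -> forall a b, (a < b)%nat -> Rs a < Rs b.
Proof.
  intros Rinc a b Hab. induction Hab; [apply Rinc |]. specialize (Rinc m). lra.
Qed.

Section Stability.

Variables (Xf : MetricFamily) (k : nat) (Rs : nat -> R) (Y : MetricFamily).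
Variables (n : nat) (H : nat -> MetricFamily).
Hypothesis Rinc : forall i, Rs i < Rs (S i).
Hypothesis H0 : H 0%nat = Y.
Hypothesis H_step : forall i, (i < n)%nat -> r_decomposable (Rs (k + i)%nat) (H i) (H (S i)).
Hypothesis H_bounded : uniformly_bounded (H n).

(* The chain of Y, idle for the first k steps and after its end. *)
Definition delayed (m : nat) : MetricFamily := H (Nat.min (m - k) n).

Definition stage (m : nat) : MetricFamily :=
  fun Z => delayed m Z \/ tails Xf k (Rs k) Y m Z.

Lemma delayed_step m : r_decomposable (Rs m) (delayed m) (isometric_closure (delayed (S m))).
Proof.
  unfold delayed.
  destruct (Nat.eq_dec (Nat.min (S m - k) n) (Nat.min (m - k) n)) as [Hidle | Hmove].
  - rewrite Hidle. intros Z HZ. apply kr_decomposition_trivial; [lia | exact HZ].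
  - replace (Nat.min (S m - k) n) with (S (m - k)) by lia.
    replace (Nat.min (m - k) n) with (m - k)%nat by lia.
    intros Z HZ. apply (kr_decomposition_mono _ _ _ (H (S (m - k)))).
    + apply isometric_closure_incl.
    + replace m with (k + (m - k))%nat at 1 by lia. apply H_step; [lia | exact HZ].
Qed.

Lemma stage_step m :
  r_decomposable (Rs m) (isometric_closure (stage m)) (isometric_closure (stage (S m))).
Proof.
  apply r_decomposable_isometric_closure. intros Z [HZ | HZ].
  - apply (kr_decomposition_mono _ _ _ (isometric_closure (delayed (S m)))).
    + apply isometric_closure_mono. intros W HW. left. exact HW.
    + apply delayed_step, HZ.
  - revert Z HZ. apply tails_r_decomposable.
    + intros Hmk. apply Rlt_le, increasing_seq_lt; assumption.
    + intros Hmk W HW. left. unfold delayed.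
      replace (Nat.min (S m - k) n) with 0%nat by lia. rewrite H0. exact HW.
    + intros W HW. right. exact HW.
Qed.

Lemma stage_final_bounded : uniformly_bounded (isometric_closure (stage (S (k + n)))).
Proof.
  destruct H_bounded as [B HB]. exists B.
  intros Z [Z' [HZ' [f [g [_ [_ Hf]]]]]] x y. rewrite <- Hf.
  destruct HZ' as [HZ' | HZ'].
  - apply HB. unfold delayed in HZ'.
    replace (Nat.min (S (k + n) - k) n) with n in HZ' by lia. exact HZ'.
  - exfalso. refine (tails_empty _ _ _ _ _ _ _ HZ' (f x)). lia.
Qed.

End Stability.

Lemma sFDC_stable_under_weak_decomposition : stable_under_weak_decomposition sFDC.
Proof.
  intros Xf [k Hk] Rs Rpos Rinc.
  destruct (Hk (Rs k) (Rpos k)) as [Y [HY HXY]].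
  destruct (HY (fun i => Rs (k + i)%nat)) as [n [H [H0 [H_step H_bounded]]]].
  { intros i. apply Rpos. }
  { intros i. rewrite Nat.add_succ_r. apply Rinc. }
  exists (S (k + n)),
    (fun m => match m with 0%nat => Xf | S _ => isometric_closure (stage Xf k Rs Y n H m) end).
  split; [reflexivity | split].
  - intros [|m] _.
    + intros X HX. apply (stage_step Xf k Rs Y n H Rinc H0 H_step 0%nat).
      apply (isometric_closure_mono (tails Xf k (Rs k) Y 0)).
      * intros Z HZ. right. exact HZ.
      * exact (tails_0 _ _ _ _ _ HXY HX).
    + exact (stage_step Xf k Rs Y n H Rinc H0 H_step (S m)).
  - exact (stage_final_bounded Xf k Rs Y n H H_bounded).
Qed.

Lemma uniformly_bounded_sFDC (Y : MetricFamily) : uniformly_bounded Y -> sFDC Y.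
Proof.
  intros HY Rs _ _. exists 0%nat, (fun _ => Y).
  split; [reflexivity | split; [intros i Hi; lia | exact HY]].
Qed.

Theorem proposition4p7 :
  (forall Xf : MetricFamily, wFDC Xf -> sFDC Xf) /\
  stable_under_weak_decomposition sFDC.
Proof.
  split; [| exact sFDC_stable_under_weak_decomposition].
  intros Xf HW. apply HW.
  - exact uniformly_bounded_sFDC.
  - exact sFDC_stable_under_weak_decomposition.
Qed.
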